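(* For an orthomodular lattice $\mathbb{L}$ the following are equivalent: (i) $\mathbb{L}$ is distributive; (ii) $\mathcal{Q}_a(\mathbb{L})\cup\mathcal{Q}_b(\mathbb{L})=\mathcal{Q}_{a\vee b}(\mathbb{L})$ for all $a,b\in\mathbb{L}$; (iii) $\mathcal{Q}_a(\mathbb{L})\cup\mathcal{Q}_{a^\perp}(\mathbb{L})=\mathcal{Q}(\mathbb{L})$ for all $a\in\mathbb{L}$; (iv) every subset of the Stone spectrum $\mathcal{Q}(\mathbb{L})$ which is both open and closed is of the form $\mathcal{Q}_a(\mathbb{L})$ for some $a\in\mathbb{L}$.
   Context: An orthomodular lattice is a lattice with least element $0$, greatest element $1$ and a map $a\mapsto a^\perp$ with $a\wedge a^\perp=0$, $a\vee a^\perp=1$, $(a\wedge b)^\perp=a^\perp\vee b^\perp$, $(a\vee b)^\perp=a^\perp\wedge b^\perp$, $a^{\perp\perp}=a$, such that $b\le a$ implies $b=a\wedge(a^\perp\vee b)$. A quasipoint in a lattice $\mathbb{L}$ with least element $0$ is a maximal (w.r.t. inclusion) subset $\mathfrak{B}\subseteq\mathbb{L}$ such that $\mathfrak{B}\neq\emptyset$, $0\notin\mathfrak{B}$, and for all $a,b\in\mathfrak{B}$ there is $c\in\mathfrak{B}$ with $c\le a\wedge b$. $\mathcal{Q}(\mathbb{L})$ denotes the set of quasipoints; for $a\in\mathbb{L}$ put $\mathcal{Q}_a(\mathbb{L})=\{\mathfrak{B}\in\mathcal{Q}(\mathbb{L}) : a\in\mathfrak{B}\}$. The Stone spectrum of $\mathbb{L}$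 is $\mathcal{Q}(\mathbb{L})$ with the topology having the sets $\mathcal{Q}_a(\mathbb{L})$ ($a\in\mathbb{L}$) as a basis. *)

From HB Require Import structures.
From mathcomp Require Import all_boot all_order.
From mathcomp Require Import boolp classical_sets.
Set Implicit Arguments. Unset Strict Implicit. Unset Printing Implicit Defensive.
Import Order.TTheory.
Local Open Scope order_scope.
Local Open Scope classical_set_scope.

Definition orthomodular (d : Order.disp_t) (L : tbLatticeType d) (perp : L -> L) : Prop :=
  (forall a : L, Order.meet a (perp a) = \bot) /\
  (forall a : L, Order.join a (perp a) = \top) /\
  (forall a b : L, perp (Order.meet a b) = Order.join (perp a) (perp b)) /\
  (forall a b : L, perp (Order.join a b) = Order.meet (perp a) (perp b)) /\
  (forall a : L, perp (perp a) = a) /\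
  (forall a b : L, b <= a -> b = Order.meet a (Order.join (perp a) b)).

Definition distributive_lattice (d : Order.disp_t) (L : tbLatticeType d) : Prop :=
  forall a b c : L, Order.meet a (Order.join b c) = Order.join (Order.meet a b) (Order.meet a c).

Definition filter_base (d : Order.disp_t) (L : tbLatticeType d) (B : set L) : Prop :=
  [/\ B !=set0, ~ B \bot &
      (forall a b, B a -> B b -> exists2 c, B c & c <= Order.meet a b)].

Definition quasipoint (d : Order.disp_t) (L : tbLatticeType d) (B : set L) : Prop :=
  filter_base B /\ (forall C : set L, filter_base C -> B `<=` C -> C = B).

Definition QL (d : Order.disp_t) (L : tbLatticeType d) : set (set L) :=
  [set B | quasipoint B].
Arguments QL {d} L.

Definition Qa (d : Order.disp_t) (L : tbLatticeType d) (a : L) : set (set L) :=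
  [set B | quasipoint B /\ B a].

Definition stone_open (d : Order.disp_t) (L : tbLatticeType d) (U : set (set L)) : Prop :=
  U `<=` QL L /\ exists A : set L, U = \bigcup_(a in A) Qa a.

Definition stone_closed (d : Order.disp_t) (L : tbLatticeType d) (F : set (set L)) : Prop :=
  F `<=` QL L /\ stone_open (QL L `\` F).

Definition stone_clopen (d : Order.disp_t) (L : tbLatticeType d) (U : set (set L)) : Prop :=
  stone_open U /\ stone_closed U.

From HB Require Import structures.
From mathcomp Require Import all_boot all_order.
From mathcomp Require Import boolp classical_sets.
Import Order.TTheory.
Local Open Scope order_scope.
Local Open Scope classical_set_scope.
Set Implicit Arguments. Unset Strict Implicit.

(* Quasipoints are the maximal filter bases, and Q_(a /\ b) = Q_a `&` Q_b holds
   in every lattice.  In an orthomodular lattice a |-> Q_a is moreover an order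
   embedding: if a is not below b then a /\ (a /\ b)^perp <> 0 lies in a
   quasipoint containing a but not b.  Hence (ii) makes a |-> Q_a a lattice
   embedding into a powerset, which forces distributivity; conversely, in a
   distributive lattice a quasipoint missing a and b contains elements
   disjoint from a and from b, hence one disjoint from a \/ b.  (iii) is (ii)
   for a \/ a^perp = 1, and implies (ii) since a quasipoint containing a^perp
   and b^perp misses a \/ b.  For (iv): the spectrum is compact (the
   complements of a cover without finite subcover generate a filter base), so
   a clopen set is a finite union of basic sets, i.e. a single Q_a by (ii);
   conversely Q(L) minus Q_a is clopen, and writing it as Q_c forces
   c = a^perp by orthomodularity. *)

Section Quasipoints.
Variables (d : Order.disp_t) (L : tbLatticeType d).
Implicit Types (a b : L) (C D : set L).

Definition upclosure D : set L := [set x | exists2 y, D y & y <= x].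

Lemma sub_upclosure D : D `<=` upclosure D.
Proof. by move=> x Dx; exists x. Qed.

Lemma filter_base_upclosure D : filter_base D -> filter_base (upclosure D).
Proof.
case=> -[y0 Dy0] nbot dir; split.
- by exists y0; exists y0.
- by case=> y Dy; rewrite lex0 => /eqP y_eq0; apply: nbot; rewrite -y_eq0.
- move=> x1 x2 [y1 D1 l1] [y2 D2 l2].
  have [c Dc lc] := dir _ _ D1 D2.
  by exists c; [exists c | exact: le_trans lc (leI2 l1 l2)].
Qed.

Section Quasipoint.
Variables (B : set L) (qB : quasipoint B).

Lemma quasipoint_filter_base : filter_base B.
Proof. by case: qB. Qed.

Lemma quasipoint_upclosure D :
  filter_base D -> B `<=` upclosure D -> upclosure D = B.
Proof. by case: qB => _ maxB fD; apply/maxB/filter_base_upclosure. Qed.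

Lemma quasipoint_neq0 : ~ B \bot.
Proof. by case: quasipoint_filter_base. Qed.

Lemma quasipoint_le a b : B a -> a <= b -> B b.
Proof.
move=> Ba ab.
by rewrite -(quasipoint_upclosure quasipoint_filter_base (@sub_upclosure B)); exists a.
Qed.

Lemma quasipoint_meet a b : B a -> B b -> B (a `&` b)%O.
Proof.
case: quasipoint_filter_base => _ _ dir Ba Bb.
by have [c Bc lc] := dir _ _ Ba Bb; exact: quasipoint_le Bc lc.
Qed.

Lemma quasipoint_top : B \top.
Proof. by case: quasipoint_filter_base => -[b Bb] _ _; exact: quasipoint_le Bb (lex1 _). Qed.

(* Maximality: otherwise the elements a /\ b, b in B, would generate a strictly
   larger filter base. *)
Lemma quasipoint_disjoint a : ~ B a -> exists2 b, B b & (a `&` b)%O = \bot.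
Proof.
move=> nBa; apply: contrapT => nodisj; apply: nBa.
pose D := [set (a `&` b)%O | b in B].
case: quasipoint_filter_base => -[b0 Bb0] _ _.
have fD : filter_base D.
  split; first by exists (a `&` b0)%O; exists b0.
  - by case=> b Bb ab0; apply: nodisj; exists b.
  - move=> _ _ [b1 B1 <-] [b2 B2 <-].
    exists (a `&` (b1 `&` b2))%O; first by exists (b1 `&` b2)%O => //; exact: quasipoint_meet.
    by rewrite meetACA meetxx.
have BD : B `<=` upclosure D by move=> b Bb; exists (a `&` b)%O; [exists b | exact: leIr].
by rewrite -(quasipoint_upclosure fD BD); exists (a `&` b0)%O; [exists b0 | exact: leIl].
Qed.

End Quasipoint.

Lemma filter_base_chain_union C (F : set (set L)) :
  filter_base C -> (forall X, F X -> filter_base (C `|` X)) ->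
  total_on F subset -> filter_base (C `|` \bigcup_(X in F) X).
Proof.
move=> [[c0 Cc0] nbotC dirC] fF chainF; split; first by exists c0; left.
  by case=> [//|[X FX Xbot]]; case: (fF X FX) => _ []; right.
have common a b : (C `|` \bigcup_(X in F) X) a -> (C `|` \bigcup_(X in F) X) b ->
    (C a /\ C b) \/ exists2 X, F X & (C `|` X) a /\ (C `|` X) b.
  move=> [Ca|[X FX Xa]] [Cb|[Y FY Yb]]; [by left | right..].
  - by exists Y => //; split; [left | right].
  - by exists X => //; split; [right | left].
  - case: (chainF X Y FX FY) => [XY|YX]; [exists Y | exists X] => //.
    + by split; right => //; exact: XY.
    + by split; right => //; exact: YX.
move=> a b Ha Hb; case: (common a b Ha Hb) => [[Ca Cb]|[X FX [Xa Xb]]].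
  by have [c Cc lc] := dirC _ _ Ca Cb; exists c => //; left.
have [_ _ dirX] := fF X FX.
by have [c [Cc|Xc] lc] := dirX _ _ Xa Xb; exists c => //; [left | right; exists X].
Qed.

(* Zorn's lemma is applied to the sets X such that C `|` X is a filter base,
   so that the empty chain is harmless. *)
Lemma quasipoint_ext C : filter_base C -> exists2 B, quasipoint B & C `<=` B.
Proof.
move=> fC.
have [|X [fCX maxX]] := @Zorn_bigcup L [set X | filter_base (C `|` X)].
  by move=> F FP; exact: filter_base_chain_union.
exists (C `|` X); last by move=> x Cx; left.
split=> // D fD CXD.
have CD : C `|` D = D by apply/setUidr => x Cx; apply: CXD; left.
apply/seteqP; split=> [x Dx|//]; right.
apply: contrapT => nXx; apply: (maxX D); last by rewrite /= CD.
by split=> [y Xy|DX]; [apply: CXD; right | apply: nXx; exact: DX].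
Qed.

Lemma quasipoint_of_neq0 a : a <> \bot -> exists2 B, quasipoint B & B a.
Proof.
move=> a0; have fa : filter_base [set a].
  split; [by exists a | by move=> /esym | by move=> _ _ -> ->; exists a; rewrite ?meetxx].
by have [B qB aB] := quasipoint_ext fa; exists B => //; exact: aB.
Qed.

Lemma Qa_top : Qa \top = QL L.
Proof. by apply/seteqP; split=> [B []//|B qB]; split=> //; exact: quasipoint_top. Qed.

Lemma Qa_bot : Qa \bot = set0 :> set (set L).
Proof. by apply/seteqP; split=> // B [qB]; exact: quasipoint_neq0. Qed.

Lemma Qa_eq0 a : Qa a = set0 -> a = \bot.
Proof.
move=> Qa0; apply: contrapT => /quasipoint_of_neq0 [B qB Ba].
by have : Qa a B by []; rewrite Qa0.
Qed.

Lemma QaI a b : Qa (a `&` b)%O = Qa a `&` Qa b.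
Proof.
apply/seteqP; split=> [B [qB Bab]|B [[qB Ba] [_ Bb]]].
  by split; split=> //; apply: (quasipoint_le qB Bab); rewrite ?leIl ?leIr.
by split=> //; apply: (quasipoint_meet qB).
Qed.

Lemma subset_Qa_join a b : Qa a `|` Qa b `<=` Qa (a `|` b)%O.
Proof.
by move=> B [[qB Bx]|[qB Bx]]; split=> //; apply: (quasipoint_le qB Bx);
  rewrite ?leUl ?leUr.
Qed.

Lemma stone_open_Qa a : stone_open (Qa a).
Proof. by split=> [B []//|]; exists [set a]; rewrite bigcup_set1. Qed.

Lemma QL_setD_Qa a :
  QL L `\` Qa a = \bigcup_(b in [set b | (a `&` b)%O = \bot]) Qa b.
Proof.
apply/seteqP; split=> [B [qB nQaB]|B [b ab0 [qB Bb]]].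
  have [|b Bb ab0] := quasipoint_disjoint qB (a := a); last by exists b.
  by move=> Ba; apply: nQaB.
split=> // -[_ Ba]; apply: (quasipoint_neq0 qB).
by rewrite -[X in B X]ab0; apply: (quasipoint_meet qB).
Qed.

Lemma Qa_join_of_distributive :
  distributive_lattice L -> forall a b, Qa a `|` Qa b = Qa (a `|` b)%O.
Proof.
move=> distrL a b; rewrite eqEsubset; split=> [|B [qB Bab]]; first exact: subset_Qa_join.
case: (pselect (B a)) => [Ba|nBa]; first by left.
case: (pselect (B b)) => [Bb|nBb]; first by right.
have [ca Bca ca0] := quasipoint_disjoint qB nBa.
have [cb Bcb cb0] := quasipoint_disjoint qB nBb.
exfalso; apply: (quasipoint_neq0 qB).
have <- : ((ca `&` cb) `&` (a `|` b))%O = \bot.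
  rewrite distrL; apply/eqP; rewrite -lex0 leUx -{1}ca0 -cb0 !lexI !leIr /=.
  by rewrite (le_trans (leIl _ _) (leIl _ _)) (le_trans (leIl _ _) (leIr _ _)).
by apply: (quasipoint_meet qB) Bab; apply: (quasipoint_meet qB).
Qed.

End Quasipoints.

Section Orthomodular.
Variables (d : Order.disp_t) (L : tbLatticeType d) (perp : L -> L).
Hypothesis hL : orthomodular perp.
Implicit Types (a b x y : L).

Lemma meet_perp a : (a `&` perp a)%O = \bot.
Proof. by case: hL. Qed.

Lemma join_perp a : (a `|` perp a)%O = \top.
Proof. by case: hL => _ []. Qed.

Lemma perpI a b : perp (a `&` b)%O = (perp a `|` perp b)%O.
Proof. by case: hL => _ [_ []]. Qed.

Lemma perpU a b : perp (a `|` b)%O = (perp a `&` perp b)%O.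
Proof. by case: hL => _ [_ [_ []]]. Qed.

Lemma perpK : involutive perp.
Proof. by case: hL => _ [_ [_ [_ []]]]. Qed.

Lemma orthomodular_law a b : b <= a -> b = (a `&` (perp a `|` b))%O.
Proof. by case: hL => _ [_ [_ [_ [_ h]]]]; exact: h. Qed.

Lemma perp0 : perp \bot = \top.
Proof. by rewrite -(join_perp \bot) join0x. Qed.

Lemma perp_le a b : a <= b -> perp b <= perp a.
Proof. by move=> ab; rewrite -(join_r ab) perpU leIl. Qed.

Lemma eq_of_le_meet_perp0 a b : b <= a -> (perp b `&` a)%O = \bot -> a = b.
Proof.
move=> ba pba0; have := orthomodular_law (perp_le ba); rewrite perpK => ab.
by rewrite -(perpK a) ab perpI perpK perpU perpK pba0 joinx0.
Qed.

Lemma Qa_meet_perp a : Qa a `&` Qa (perp a) = set0.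
Proof. by rewrite -QaI meet_perp Qa_bot. Qed.

Lemma Qa_perp_disjoint a B : Qa a B -> Qa (perp a) B -> False.
Proof. by move=> Ba Bpa; have : (Qa a `&` Qa (perp a)) B by []; rewrite Qa_meet_perp. Qed.

Lemma Qa_subset_le a b : Qa a `<=` Qa b -> a <= b.
Proof.
move=> sab; have : (a `&` perp (a `&` b))%O = \bot.
  apply: Qa_eq0; apply/seteqP; split=> // B; rewrite QaI => -[Ba Bp].
  by rewrite -(Qa_meet_perp (a `&` b)%O) QaI; split=> //; split=> //; exact: sab.
by rewrite meetC => /(eq_of_le_meet_perp0 (leIl a b)) ->; exact: leIr.
Qed.

Lemma Qa_inj : injective (@Qa d L).
Proof. by move=> a b eab; apply: le_anti; rewrite !Qa_subset_le // eab. Qed.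

Lemma distributive_of_Qa_join :
  (forall a b, Qa a `|` Qa b = Qa (a `|` b)%O) -> distributive_lattice L.
Proof. by move=> QaU a b c; apply: Qa_inj; rewrite QaI -!QaU !QaI setIUr. Qed.

Lemma Qa_cover_perp_of_Qa_join :
  (forall a b, Qa a `|` Qa b = Qa (a `|` b)%O) ->
  forall a, Qa a `|` Qa (perp a) = QL L.
Proof. by move=> QaU a; rewrite QaU join_perp Qa_top. Qed.

Lemma Qa_join_of_Qa_cover_perp :
  (forall a, Qa a `|` Qa (perp a) = QL L) ->
  forall a b, Qa a `|` Qa b = Qa (a `|` b)%O.
Proof.
move=> cover a b; rewrite eqEsubset; split=> [|B [qB Bab]]; first exact: subset_Qa_join.
have : QL L B by [].
rewrite -(cover a) => -[|Bpa]; first by left.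
have : QL L B by [].
rewrite -(cover b) => -[|Bpb]; first by right.
by case: (@Qa_perp_disjoint (a `|` b)%O B); rewrite // perpU QaI.
Qed.

Lemma top_of_Qa_cover (S : set L) :
  S \bot -> (forall x y, S x -> S y -> S (x `|` y)%O) ->
  QL L `<=` \bigcup_(x in S) Qa x -> S \top.
Proof.
move=> S0 SU cover; apply: contrapT => nStop.
have fC : filter_base [set z | exists2 x, S x & perp x <= z].
  split; first by exists \top, \bot; rewrite ?perp0.
  - case=> x Sx; rewrite lex0 => /eqP px0; apply: nStop.
    by rewrite -perp0 -px0 perpK.
  - move=> z1 z2 [x1 S1 l1] [x2 S2 l2]; exists (perp (x1 `|` x2)%O).
      by exists (x1 `|` x2)%O; last exact: lexx; exact: SU.
    by rewrite perpU leI2.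
have [B qB CB] := quasipoint_ext fC.
have [x Sx Bx] := cover B qB.
have Bpx : Qa (perp x) B by split=> //; apply: CB; exists x.
exact: Qa_perp_disjoint Bx Bpx.
Qed.

Lemma Qa_of_stone_clopen :
  (forall a b, Qa a `|` Qa b = Qa (a `|` b)%O) ->
  forall U, stone_clopen U -> exists a, U = Qa a.
Proof.
move=> QaU U [[UQ [A eA]] [_ [_ [A' eA']]]].
pose V := QL L `\` U.
pose S := [set z | exists x y, [/\ Qa x `<=` U, Qa y `<=` V & z = (x `|` y)%O]].
have [x [y [xU yV xy]]] : S \top.
  apply: top_of_Qa_cover.
  - by exists \bot, \bot; rewrite Qa_bot joinx0; split.
  - move=> _ _ [x1 [y1 [U1 V1 ->]]] [x2 [y2 [U2 V2 ->]]].
    exists (x1 `|` x2)%O, (y1 `|` y2)%O; rewrite -!QaU !subUset joinACA.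
    by split.
  - move=> B qB; case: (pselect (U B)) => [UB|nUB].
      move: UB; rewrite {1}eA => -[a Aa Ba]; exists a => //.
      exists a, \bot; rewrite Qa_bot joinx0; split=> //.
      by rewrite eA => C Ca; exists a.
    have : V B by [].
    rewrite /V eA' => -[a Aa Ba]; exists a => //.
    exists \bot, a; rewrite Qa_bot join0x; split=> //.
    by rewrite /V eA' => C Ca; exists a.
exists x; rewrite eqEsubset; split=> [B UB|//].
have : Qa (x `|` y)%O B by rewrite -xy Qa_top; exact: UQ.
by rewrite -QaU => -[//|/yV []].
Qed.

Lemma Qa_cover_perp_of_clopen :
  (forall U, U `<=` QL L -> stone_clopen U -> exists a, U = Qa a) ->
  forall a, Qa a `|` Qa (perp a) = QL L.
Proof.
move=> clopenQa a; pose V := QL L `\` Qa a.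
have clV : stone_clopen V.
  split; first by split=> [B []//|]; eexists; exact: QL_setD_Qa.
  by split=> [B []//|]; rewrite /V setDD setIidr; [exact: stone_open_Qa | by move=> B []].
have [|c ec] := clopenQa V _ clV; first by move=> B [].
have pac : perp a <= c.
  apply: Qa_subset_le; rewrite -ec => B Bpa; split; first by case: Bpa.
  by move=> Ba; exact: Qa_perp_disjoint Ba Bpa.
have ac0 : (a `&` c)%O = \bot by apply: Qa_eq0; rewrite QaI -ec setDIK.
have -> : perp a = c by apply/esym/eq_of_le_meet_perp0; rewrite // perpK.
by rewrite -ec setDUK // => B [].
Qed.

End Orthomodular.

Theorem proposition3p16 (d : Order.disp_t) (L : tbLatticeType d) (perp : L -> L)
  (hL : orthomodular perp) :
  [/\ (distributive_lattice L <->
        forall a b : L, setU (Qa a) (Qa b) = Qa (Order.join a b)),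
      (distributive_lattice L <->
        forall a : L, setU (Qa a) (Qa (perp a)) = QL L) &
      (distributive_lattice L <->
        forall U : set (set L), U `<=` QL L -> stone_clopen U ->
          exists a : L, U = Qa a)].
Proof.
split; split.
- exact: Qa_join_of_distributive.
- exact: distributive_of_Qa_join hL.
- by move/Qa_join_of_distributive; exact: Qa_cover_perp_of_Qa_join hL.
- by move/(Qa_join_of_Qa_cover_perp hL); exact: distributive_of_Qa_join hL.
- move/Qa_join_of_distributive/(Qa_of_stone_clopen hL) => clopenQa U _.
  exact: clopenQa.
- move/(Qa_cover_perp_of_clopen hL)/(Qa_join_of_Qa_cover_perp hL).
  exact: distributive_of_Qa_join hL.
Qed.
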